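(* Let $r \geq 4$, let $t \geq 1$, and let $H_t$ be a member of the family $\mathcal H_t$ (defined in the context), with vertex sequence $V_0 \subset V_1 \subset \cdots \subset V_t$ and added vertices $v_1,\dots,v_t$. Run the $K_r$-bootstrap process starting from $H_t$. Then: (a) for every vertex $u \in V_{t-2}$ (with $V_{-1} := \emptyset$), the edge $\{u, v_t\}$ is either already present in $H_t$ or becomes active precisely at time $t$; (b) for every $0 \leq s \leq t$, at time $s$ the vertex set $V_s$ spans a complete graph in $\langle H_t \rangle_s$, i.e. $\langle H_t\rangle_s[V_s] \cong K_{r-1+s}$.
   Context: $K_r$-bootstrap percolation: for a graph $G$ on vertex set $[n]$, set $G_0 := G$ and $G_{t+1} := G_t \cup \{e : \exists$ a copy $H$ of $K_r$ with $e \in H \subseteq G_t \cup \{e\}\}$; write $\langle G \rangle_t := G_t$. The family $\mathcal H_t$ ($t \geq 1$) is defined recursively. Let $H_0$ be an $(r-1)$-clique (the body) with vertex set $V_0$, and let $v_0$ be an arbitrary fixed vertex of $V_0$. A graph $H_t \in \mathcal H_t$ has vertex set $V_t := V_{t-1} \cup \{v_t\}$ with a new vertex $v_t$, and satisfies: (i) $H_t[V_{t-1}] = H_{t-1}$ for some $H_{t-1} \in \mathcal H_{t-1}$ (with $\mathcal H_0=\{H_0\}$); (ii) $v_{t-1} \in N(v_t)$; (iii) $|N(v_t)| = r-2$, where $N(v_t) \subseteq V_{t-1}$; (iv) for $t \geq 2$, $N(v_t) \setminus \{v_{t-1}\} \not\subseteq N(v_{t-1})$. For $t=1$ conditions (i)–(iii)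 make $H_1$ the graph $K_r$ minus one edge, and $\mathcal H_1 = \{K_r - e\}$. Such $H_t$ has $r-1+t$ vertices and $\binom{r-1}{2} + t(r-2)$ edges. *)

From mathcomp Require Import all_boot.
Set Implicit Arguments. Unset Strict Implicit. Unset Printing Implicit Defensive.

(* One round of K_r-bootstrap percolation on vertex set [n] = {0,..,n-1}:
   an edge {x,y} is added if there is a set S of r vertices of [n]
   (a copy of K_r) containing x and y all of whose pairs other than {x,y}
   are already edges. *)
Definition kr_step (r n : nat) (G : nat -> nat -> Prop) : nat -> nat -> Prop :=
  fun x y => G x y \/
    (x <> y /\ x < n /\ y < n /\
     exists S : seq nat,
       [/\ uniq S, size S = r, all (fun v => v < n) S, x \in S & y \in S] /\
       forall a b, a \in S -> b \in S -> a <> b ->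
         G a b \/ (a = x /\ b = y) \/ (a = y /\ b = x)).

Fixpoint kr_boot (r n : nat) (G : nat -> nat -> Prop) (s : nat) : nat -> nat -> Prop :=
  match s with
  | 0 => G
  | s'.+1 => kr_step r n (kr_boot r n G s')
  end.

(* Vertex labelling of H_t: V_0 = {0,..,r-2} (the body, an (r-1)-clique),
   v_0 = v0 (a fixed vertex of V_0), and v_s = r-2+s for s >= 1,
   so that V_s = {0,..,r-2+s}. *)
Definition vtx (r v0 s : nat) : nat := if s is 0 then v0 else r - 2 + s.

(* The graph H_t determined by the back-neighbourhoods N s = N(v_s) (s = 1..t). *)
Definition Hgraph (r t : nat) (N : nat -> nat -> bool) : nat -> nat -> Prop :=
  fun x y =>
    (x <> y /\ x < r - 1 /\ y < r - 1) \/
    (exists s, [/\ 1 <= s, s <= t &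
                 (x = r - 2 + s /\ N s y) \/ (y = r - 2 + s /\ N s x)]).

Definition in_family (r t v0 : nat) (N : nat -> nat -> bool) : Prop :=
  v0 < r - 1 /\
  forall s, 1 <= s -> s <= t ->
    [/\ (forall u, N s u -> u < r - 2 + s),
        N s (vtx r v0 s.-1),
        count (N s) (iota 0 (r - 2 + s)) = r - 2 &
        (2 <= s -> exists u, [/\ N s u, u <> vtx r v0 s.-1 & ~~ N s.-1 u])].

(* For s <= t the graph <H_t>_s is H_t together with a clique on V_s, and both claims are read
   off from this description.  One round turns V_(s+1) into a clique: v_(s+1), its r - 2
   back-neighbours (which lie in the clique V_s) and any other vertex of V_s span K_r minus an
   edge.  Nothing else is added: take a copy of K_r completing a new edge and let v_j be its
   largest vertex.  If v_j lies outside V_(s+1), its edges inside the copy are edges of H_t, so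
   they go to its r - 2 back-neighbours; hence v_j is an endpoint of the new edge and the rest
   of the copy is exactly N(v_j).  Condition (iv) then yields two vertices of N(v_j) that must
   be adjacent in H_t but are not. *)

From mathcomp Require Import all_boot zify.

Set Implicit Arguments.
Unset Strict Implicit.

Lemma kr_step_mono r n (G G' : nat -> nat -> Prop) x y :
  (forall a b, G a b -> G' a b) -> kr_step r n G x y -> kr_step r n G' x y.
Proof.
move=> GG' [Gxy|[neq_xy [x_lt [y_lt [S [copyS adjS]]]]]]; first by left; apply: GG'.
right; do 3 (split=> //); exists S; split=> // a b aS bS neq_ab.
by case: (adjS a b aS bS neq_ab) => [/GG'|]; tauto.
Qed.

Lemma kr_step_sym r n (G : nat -> nat -> Prop) x y :
  (forall a b, G a b -> G b a) -> kr_step r n G x y -> kr_step r n G y x.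
Proof.
move=> symG [Gxy|[neq_xy [x_lt [y_lt [S [[uS sizeS ltS xS yS] adjS]]]]]].
  by left; apply: symG.
right; split; first exact: nesym.
do 2 (split=> //); exists S; split=> // a b aS bS neq_ab.
by case: (adjS a b aS bS neq_ab); tauto.
Qed.

Lemma bigmax_mem (S : seq nat) : S != [::] -> \max_(z <- S) z \in S.
Proof.
elim: S => // a S IH _; rewrite big_cons inE.
case: S IH => [|b S] IH; first by rewrite big_nil maxn0 eqxx.
by rewrite /maxn; case: ifP => _; rewrite ?eqxx ?IH ?orbT.
Qed.

Lemma vtx_new r v0 s : 0 < s -> vtx r v0 s = r - 2 + s.
Proof. by case: s. Qed.

Lemma Hgraph_sym r t (N : nat -> nat -> bool) x y : Hgraph r t N x y -> Hgraph r t N y x.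
Proof.
case=> [[neq_xy [x_lt y_lt]]|[s [s_ge1 s_le [e|e]]]].
- by left; split=> //; apply: nesym.
- by right; exists s; split=> //; right.
- by right; exists s; split=> //; left.
Qed.

Lemma Hgraph_back_nbr r t (N : nat -> nat -> bool) j z :
  0 < j <= t -> N j z -> Hgraph r t N (r - 2 + j) z.
Proof. by case/andP=> j_gt0 j_le Njz; right; exists j; split=> //; left. Qed.

Section Bootstrap.

Variables (r t v0 : nat) (N : nat -> nat -> bool).
Hypothesis family : in_family r t v0 N.

Definition H_clique s x y :=
  Hgraph r t N x y \/ (x <> y /\ x < r - 1 + s /\ y < r - 1 + s).

Definition back_nbrs j := filter (N j) (iota 0 (r - 2 + j)).

Lemma r_gt1 : 1 < r.
Proof. by case: family; lia. Qed.

Lemma back_nbr_lt j z : 0 < j <= t -> N j z -> z < r - 2 + j.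
Proof. by case/andP=> j_gt0 j_le; have [lt_N _ _ _] := family.2 j j_gt0 j_le; apply: lt_N. Qed.

Lemma mem_back_nbrs j z : 0 < j <= t -> (z \in back_nbrs j) = N j z.
Proof.
move=> j_range; rewrite mem_filter mem_iota /=.
by case Njz: (N j z) => //=; rewrite (back_nbr_lt j_range Njz).
Qed.

Lemma size_back_nbrs j : 0 < j <= t -> size (back_nbrs j) = r - 2.
Proof.
by case/andP=> j_gt0 j_le; have [_ _ count_N _] := family.2 j j_gt0 j_le; rewrite size_filter.
Qed.

Lemma uniq_back_nbrs j : uniq (back_nbrs j).
Proof. by rewrite filter_uniq ?iota_uniq. Qed.

Lemma Hgraph_new_vertex j z :
  0 < j -> z < r - 2 + j -> Hgraph r t N (r - 2 + j) z -> j <= t /\ N j z.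
Proof.
move=> j_gt0 z_lt [[_ [lt_body _]]|[s [s_gt0 s_le [[e Nsz]|[e Nsx]]]]].
- lia.
- by have -> : j = s by lia.
- have s_range : 0 < s <= t by rewrite s_gt0.
  by have := back_nbr_lt s_range Nsx; lia.
Qed.

Lemma H_clique_new_vertex s j z :
  s < j -> z < r - 2 + j -> H_clique s (r - 2 + j) z -> j <= t /\ N j z.
Proof.
move=> s_lt z_lt [H|[_ [lt_Vs _]]]; last lia.
by apply: Hgraph_new_vertex => //; lia.
Qed.

Lemma H_clique_sym s x y : H_clique s x y -> H_clique s y x.
Proof.
case=> [/Hgraph_sym|[neq_xy [x_lt y_lt]]]; first by left.
by right; split=> //; apply: nesym.
Qed.

Lemma step_new_vertex_edge s y : s < t -> y < r - 1 + s ->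
  kr_step r (r - 1 + t) (H_clique s) (r - 1 + s) y.
Proof.
move=> s_lt y_lt; have r_gt1 := r_gt1.
have j_range : 0 < s.+1 <= t by [].
have x_eq : r - 1 + s = r - 2 + s.+1 by lia.
have [Ny|nNy] := boolP (N s.+1 y).
  by left; left; rewrite x_eq; apply: Hgraph_back_nbr.
have nbr_lt z : z \in back_nbrs s.+1 -> z < r - 1 + s.
  by rewrite mem_back_nbrs // x_eq; apply: back_nbr_lt.
have x_adj z : z \in back_nbrs s.+1 -> Hgraph r t N (r - 1 + s) z.
  by rewrite mem_back_nbrs // x_eq; apply: Hgraph_back_nbr.
right; do 3 (split; first lia).
exists [:: y, r - 1 + s & back_nbrs s.+1]; split.
  split; rewrite ?inE ?eqxx ?orbT //=.
  - rewrite uniq_back_nbrs andbT inE negb_or mem_back_nbrs // (negbTE nNy) andbT.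
    by apply/andP; split; [apply/eqP; lia | apply/negP => /nbr_lt; lia].
  - by rewrite size_back_nbrs; lia.
  - by apply/and3P; split; [apply/ltP; lia | apply/ltP; lia | apply/allP => z /nbr_lt; lia].
have in_Vs z : z \in [:: y, r - 1 + s & back_nbrs s.+1] -> z != r - 1 + s -> z < r - 1 + s.
  by rewrite !inE => /or3P [/eqP -> | /eqP -> | /nbr_lt] //; rewrite eqxx.
move=> a b aS bS neq_ab.
case: (eqVneq a (r - 1 + s)) => [ea|na]; case: (eqVneq b (r - 1 + s)) => [eb|nb].
- by rewrite ea eb in neq_ab.
- move: bS; rewrite ea !inE (negbTE nb) /= => /orP [/eqP -> | /x_adj]; first tauto.
  by left; left.
- move: aS; rewrite eb !inE (negbTE na) /= => /orP [/eqP -> | /x_adj /Hgraph_sym]; first tauto.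
  by left; left.
- by left; right; split=> //; split; apply: in_Vs.
Qed.

Lemma H_clique_sub_step s x y : s < t ->
  H_clique s.+1 x y -> kr_step r (r - 1 + t) (H_clique s) x y.
Proof.
move=> s_lt [H|[neq_xy [x_lt y_lt]]]; first by left; left.
have [x_old|x_new] := ltnP x (r - 1 + s); last first.
  have -> : x = r - 1 + s by lia.
  by apply: step_new_vertex_edge => //; lia.
have [y_old|y_new] := ltnP y (r - 1 + s); first by left; right.
apply: kr_step_sym; first exact: H_clique_sym.
have -> : y = r - 1 + s by lia.
by apply: step_new_vertex_edge.
Qed.

Section TopVertex.

Variables (s j x y : nat) (S : seq nat).
Hypotheses (s_lt : s.+1 < j) (j_le : j <= t).
Hypotheses (uniq_S : uniq S) (size_S : size S = r).
Hypotheses (top_S : r - 2 + j \in S) (max_S : forall z, z \in S -> z <= r - 2 + j).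
Hypothesis copy_S : forall a b, a \in S -> b \in S -> a <> b ->
  H_clique s a b \/ (a = x /\ b = y) \/ (a = y /\ b = x).

Lemma top_back_nbr z : z \in S -> z <> r - 2 + j -> H_clique s (r - 2 + j) z -> N j z.
Proof.
move=> zS neq_z H; have z_lt : z < r - 2 + j by have := max_S zS; lia.
by case: (H_clique_new_vertex (ltnW s_lt) z_lt H).
Qed.

Lemma top_endpoint : r - 2 + j = x \/ r - 2 + j = y.
Proof.
case: (eqVneq (r - 2 + j) x) => [|nx]; first by left.
case: (eqVneq (r - 2 + j) y) => [|ny]; first by right.
have sub_nbrs : {subset rem (r - 2 + j) S <= back_nbrs j}.
  move=> z; rewrite mem_rem_uniq // inE => /andP [/eqP neq_z zS].
  rewrite mem_back_nbrs; last lia.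
  apply: top_back_nbr => //.
  case: (copy_S top_S zS (nesym neq_z)) => [//|[[e _]|[e _]]].
  - by rewrite e eqxx in nx.
  - by rewrite e eqxx in ny.
have := uniq_leq_size (rem_uniq _ uniq_S) sub_nbrs.
by rewrite size_rem // size_S size_back_nbrs; have := r_gt1; lia.
Qed.

Lemma back_nbr_in_copy : x = r - 2 + j -> y \in S -> x <> y ->
  forall z, N j z -> [/\ z \in S, z <> y & z <> x].
Proof.
move=> ex yS neq_xy; have r_gt1 := r_gt1.
have j_range : 0 < j <= t by rewrite j_le andbT; lia.
have xS : x \in S by rewrite ex.
set T := rem y (rem x S).
have memT z : z \in T = [&& z != y, z != x & z \in S].
  by rewrite (mem_rem_uniq _ (rem_uniq _ uniq_S)) inE (mem_rem_uniq _ uniq_S).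
have sub_nbrs : {subset T <= back_nbrs j}.
  move=> z; rewrite memT mem_back_nbrs // => /and3P [/eqP ny /eqP nx zS].
  case: (copy_S xS zS (nesym nx)) => [|[[_ //]|[//]]].
  by rewrite ex; apply: top_back_nbr; rewrite -?ex.
have size_T : size (back_nbrs j) <= size T.
  rewrite size_rem; last by rewrite (mem_rem_uniq _ uniq_S) inE yS andbT; apply/eqP; apply: nesym.
  by rewrite size_rem // size_S size_back_nbrs //; lia.
have [_ T_eq] := uniq_min_size (rem_uniq _ (rem_uniq _ uniq_S)) sub_nbrs size_T.
by move=> z; rewrite -mem_back_nbrs // -T_eq memT => /and3P [/eqP ? /eqP ? ?].
Qed.

(* Condition (iv) gives a back-neighbour u of v_j that is not adjacent to the back-neighbour
   v_(j-1) of v_j; both lie in the copy, and v_(j-1) lies outside V_s, so they are adjacent in H_t. *)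
Lemma top_endpoint_edge : x = r - 2 + j -> y \in S -> x <> y -> Hgraph r t N x y.
Proof.
move=> ex yS neq_xy; have in_copy := back_nbr_in_copy ex yS neq_xy.
have j_gt0 : 0 < j by lia.
have [Ny|nNy] := boolP (N j y).
  by rewrite ex; apply: Hgraph_back_nbr; rewrite // j_gt0.
have [lt_N Nprev _ fresh] := family.2 j j_gt0 j_le.
have [u [Nu neq_u nNu]] := fresh ltac:(lia).
have prev : vtx r v0 j.-1 = r - 2 + j.-1 by rewrite vtx_new //; lia.
rewrite prev in Nprev neq_u.
have [uS u_ny u_nx] := in_copy u Nu.
have [pS p_ny p_nx] := in_copy _ Nprev.
have u_lt : u < r - 2 + j.-1 by have := lt_N u Nu; lia.
have H : H_clique s (r - 2 + j.-1) u.
  by case: (copy_S pS uS (nesym neq_u)) => [|[[]|[]]].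
have s_lt' : s < j.-1 by lia.
have [_ Nu'] := H_clique_new_vertex s_lt' u_lt H.
by rewrite Nu' in nNu.
Qed.

End TopVertex.

Lemma step_sub_H_clique s x y : s < t ->
  kr_step r (r - 1 + t) (H_clique s) x y -> H_clique s.+1 x y.
Proof.
move=> s_lt [[H|[neq_xy [x_lt y_lt]]]|[neq_xy [_ [_ [S [[uS size_S lt_S xS yS] copy_S]]]]]].
- by left.
- by right; split=> //; lia.
have r_gt1 := r_gt1.
set w := \max_(z <- S) z.
have wS : w \in S.
  by apply: bigmax_mem; apply/eqP => S0; move: size_S; rewrite S0 /=; lia.
have max_S z : z \in S -> z <= w by move=> zS; apply: leq_bigmax_seq.
have [w_old|w_new] := ltnP w (r - 1 + s.+1).
  by right; split=> //; have := max_S x xS; have := max_S y yS; lia.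
have ew : w = r - 2 + (w - (r - 2)) by lia.
have j_le : w - (r - 2) <= t by have := allP lt_S w wS; lia.
have s_lt_j : s.+1 < w - (r - 2) by lia.
rewrite ew in wS max_S.
have copy_S' a b : a \in S -> b \in S -> a <> b ->
    H_clique s a b \/ (a = y /\ b = x) \/ (a = x /\ b = y).
  by move=> aS bS neq_ab; case: (copy_S a b aS bS neq_ab); tauto.
have edge_at_top := top_endpoint_edge s_lt_j j_le uS size_S wS max_S.
left; case: (top_endpoint s_lt_j j_le uS size_S wS max_S copy_S) => e.
- exact: edge_at_top copy_S (esym e) yS neq_xy.
- exact/Hgraph_sym/(edge_at_top _ _ copy_S' (esym e) xS (nesym neq_xy)).
Qed.

Lemma kr_boot_H_clique s : s <= t -> forall x y,
  kr_boot r (r - 1 + t) (Hgraph r t N) s x y <-> H_clique s x y.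
Proof.
elim: s => [|s IH] s_le x y /=.
  split; first by left.
  by case=> // [[neq_xy [x_lt y_lt]]]; left; split=> //; lia.
split=> [boot_xy|H].
- apply: step_sub_H_clique => //.
  by apply: kr_step_mono boot_xy => a b /(IH (ltnW s_le)).
- by apply: kr_step_mono (H_clique_sub_step s_le H) => a b /(IH (ltnW s_le)).
Qed.

End Bootstrap.

Theorem proposition1 (r t v0 : nat) (N : nat -> nat -> bool) :
  4 <= r -> 1 <= t -> in_family r t v0 N ->
  let n := r - 1 + t in
  let G := kr_boot r n (Hgraph r t N) in
  (* (a): u in V_{t-2} (empty when t = 1), i.e. t >= 2 and u < r - 3 + t *)
  (forall u, 2 <= t -> u < r - 3 + t ->
     Hgraph r t N u (vtx r v0 t) \/
     (G t u (vtx r v0 t) /\ ~ G t.-1 u (vtx r v0 t))) /\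
  (* (b): V_s = {0,..,r-2+s} is a clique in <H_t>_s *)
  (forall s, s <= t -> forall x y, x <> y -> x < r - 1 + s -> y < r - 1 + s ->
     G s x y).
Proof.
move=> r_ge4 t_gt0 family n G.
have boot s x y (s_le : s <= t) : G s x y <-> H_clique r t N s x y :=
  kr_boot_H_clique family s_le x y.
split=> [u t_gt1 u_lt | s s_le x y neq_xy x_lt y_lt]; last by apply/boot => //; right.
have {}u_lt : u < r - 2 + t by lia.
have t_range : 0 < t <= t by rewrite t_gt0 leqnn.
rewrite vtx_new //; have [Ntu|nNtu] := boolP (N t u).
  by left; apply/Hgraph_sym/Hgraph_back_nbr.
right; split; first by apply/boot => //; right; split; lia.
case/boot=> [|/Hgraph_sym H|[_ [_ v_lt]]]; [exact: leq_pred | | lia].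
have [_ Ntu] := Hgraph_new_vertex family t_gt0 u_lt H.
by rewrite Ntu in nNtu.
Qed.
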